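(* In the setting below, let $F_1,\dots,F_n\in K_w[\mathcal G\oplus\mathcal H]$ be nonzero, let $f_i$ be the initial term of $F_i$, and assume $j(F_1,\dots,F_n)\ne0$. Let $\Phi=\sum_{\mathbf k\in\mathbb Z^n}\phi_{\mathbf k}\mathbf x^{\mathbf k}$ be a formal series with coefficients $\phi_{\mathbf k}\in K_w[\mathcal G]$. Then $\Phi(x_1,\dots,x_n)\in K_w^{\mathbf f}[\mathcal G\oplus\mathcal H]$ if and only if $\Phi(f_1,\dots,f_n)=\sum_{\mathbf k}\phi_{\mathbf k}f_1^{k_1}\cdots f_n^{k_n}$ strictly converges in $K_w[\mathcal G\oplus\mathcal H]$; and if these equivalent conditions hold, then $\Phi(F_1,\dots,F_n)=\sum_{\mathbf k}\phi_{\mathbf k}F_1^{k_1}\cdots F_n^{k_n}$ strictly converges in $K_w[\mathcal G\oplus\mathcal H]$.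
   Context: $K$ is a field. A totally ordered abelian group (TOA-group) is an abelian group with a translation-invariant total order; for a TOA-group $\mathcal A$, $K_w[\mathcal A]$ is the field of formal series $\sum_{a\in\mathcal A}c_at^a$ ($c_a\in K$) with well-ordered support; $\mathrm{ord}$ of a nonzero series is the minimum of its support, and its initial term is the term of that order. A sum strictly converges if each coefficient receives contributions from only finitely many summands and the resulting series has well-ordered support. Setting: $\mathcal G,\mathcal H$ are abelian groups with $\mathcal H\cong\mathbb Z^n$ having basis $e_1,\dots,e_n$, and $\mathcal G\oplus\mathcal H$ carries a total order making it a TOA-group ($\mathcal G$ gets the induced order). Write $x_i=t^{e_i}$ and $\mathbf x^{\mathbf k}=x_1^{k_1}\cdots x_n^{k_n}$; every element of $K_w[\mathcal G\oplus\mathcal H]$ is $\sum_{\mathbf k\in\mathbb Z^n}b_{\mathbf k}\mathbf x^{\mathbf k}$ with $b_{\mathbf k}\in K_w[\mathcal G]$. The nonzero $b_{\mathbf k}\mathbf x^{\mathbf k}$ are its $x$-terms, and the $x$-initial term is the $x$-term of least order. If $F_i$ has $x$-initial term $a_i\mathbf x^{\mathbf b_i}$ with $\mathbf b_i=(b_{i1},\dots,b_{in})$, the Jacobian number is $j(F_1,\dots,F_n)=\det(b_{ij})$. For an injective endomorphism $\rho$ of $\mathcal G\oplus\mathcal H$, the order $\le^\rho$ is $a\le^\rho b\iff\rho(a)\le\rho(b)$, and $K_w^\rho[\mathcal G\oplus\mathcal H]$ is the field of formal series with support well-ordered with respect to $\le^\rho$. If the initial term of $F_i$ is $c_it^{g_i}\mathbf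 x^{\mathbf b_i}$ ($c_i\in K$, $g_i\in\mathcal G$), then $\mathbf f$ denotes the endomorphism of $\mathcal G\oplus\mathcal H$ fixing $\mathcal G$ pointwise with $e_i\mapsto g_i+\sum_jb_{ij}e_j$ (it is injective when $\det(b_{ij})\ne0$), and $K_w^{\mathbf f}=K_w^\rho$ for $\rho=\mathbf f$. *)

From HB Require Import structures.
From mathcomp Require Import all_boot all_order all_algebra.
From mathcomp Require Import boolp classical_sets cardinality fsbigop.
Set Implicit Arguments. Unset Strict Implicit. Unset Printing Implicit Defensive.
Import Order.TTheory GRing.Theory Num.Theory.
Local Open Scope ring_scope.
Local Open Scope classical_set_scope.

Definition TOA (A : zmodType) (le : rel A) : Prop :=
  [/\ (forall a, le a a),
      (forall a b, le a b -> le b a -> a = b),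
      (forall a b c, le a b -> le b c -> le a c),
      (forall a b, le a b || le b a)
    & (forall a b c, le a b -> le (a + c) (b + c))].

Definition is_least (A : Type) (le : rel A) (S : set A) (m : A) : Prop :=
  S m /\ (forall y, S y -> le m y).

Definition well_ordered (A : Type) (le : rel A) (S : set A) : Prop :=
  forall T, T `<=` S -> (exists x, T x) -> exists m, is_least le T m.

Definition series (K : fieldType) (A : Type) := A -> K.

Definition supp (K : fieldType) (A : Type) (F : series K A) : set A :=
  [set a | F a != 0].

Definition hahn (K : fieldType) (A : Type) (le : rel A) (F : series K A) : Prop :=
  well_ordered le (supp F).

Section Series.
Variables (K : fieldType) (A : zmodType).

Definition szero : series K A := fun _ => 0.

Definition smono (c : K) (a : A) : series K A := fun b => if b == a then c else 0.

Definition sone : series K A := smono 1 0.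

(* Cauchy product: (F*G)(a) = sum_{b+c=a} F(b) G(c) (finite for Hahn series) *)
Definition smul (F G : series K A) : series K A := fun a =>
  \sum_(p \in [set p : A * A | p.1 + p.2 = a]) (F p.1 * G p.2).

Variable le : rel A.

Definition sinv (F : series K A) : series K A :=
  match pselect (exists G, hahn le G /\ smul F G = sone) with
  | left h => projT1 (cid h)
  | right _ => szero
  end.

Definition spowz (F : series K A) (k : int) : series K A :=
  match k with
  | Posz m => iter m (smul F) sone
  | Negz m => iter m.+1 (smul (sinv F)) sone
  end.

Definition sord (F : series K A) : A :=
  match pselect (exists m, is_least le (supp F) m) with
  | left h => projT1 (cid h)
  | right _ => 0
  end.

Definition sinit (F : series K A) : series K A := smono (F (sord F)) (sord F).

Definition strictly_converges (I : choiceType) (u : I -> series K A) : Prop :=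
  (forall a, finite_set [set i | u i a != 0]) /\
  hahn le (fun a => \sum_(i \in [set i | u i a != 0]) u i a).

End Series.

Section Setting.
Variables (K : fieldType) (G : zmodType) (n : nat).

Definition GH := (G * 'rV[int]_n)%type.

Variable le : rel GH.

Definition leG : rel G := fun g g' => le (g, 0) (g', 0).

(* a series in G, viewed as an element of K_w[G (+) H] (no x-dependence) *)
Definition liftG (c : series K G) : series K GH :=
  fun a => if a.2 == 0 then c a.1 else 0.

Definition xmono (k : 'rV[int]_n) : series K GH := smono 1 ((0 : G), k).

(* the series Phi(x_1,...,x_n) = sum_k phi_k x^k as an element of K^{G (+) H} *)
Definition series_of_coefs (phi : 'rV[int]_n -> series K G) : series K GH :=
  fun a => phi a.2 a.1.

(* Phi(F_1,...,F_n) : the family of summands phi_k F_1^{k_1} ... F_n^{k_n} *)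
Definition subst_terms (phi : 'rV[int]_n -> series K G)
  (F : 'I_n -> series K GH) (k : 'rV[int]_n) : series K GH :=
  smul (liftG (phi k))
       (\big[@smul K _/@sone K _]_(i < n) spowz le (F i) (k ord0 i)).

(* g_i and b_i of the initial term c_i t^{g_i} x^{b_i} of F_i.
   (The H-component of ord F_i is also the exponent of the x-initial term.) *)
Definition init_g (F : series K GH) : G := (sord le F).1.
Definition init_b (F : series K GH) : 'rV[int]_n := (sord le F).2.

Definition bmatrix (F : 'I_n -> series K GH) : 'M[int]_n :=
  \matrix_(i, j) init_b (F i) ord0 j.
Definition jacobian_number (F : 'I_n -> series K GH) : int := \det (bmatrix F).

(* the endomorphism f of G (+) H : identity on G, e_i |-> g_i + sum_j b_ij e_j *)
Definition fendo (F : 'I_n -> series K GH) (a : GH) : GH :=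
  (a.1 + \sum_(i < n) (init_g (F i) *~ a.2 ord0 i), a.2 *m bmatrix F).

Definition le_f (F : 'I_n -> series K GH) : rel GH :=
  fun a b => le (fendo F a) (fendo F b).

End Setting.

From HB Require Import structures.
From mathcomp Require Import all_boot all_order all_algebra.
From mathcomp Require Import boolp classical_sets functions cardinality fsbigop.
Set Implicit Arguments. Unset Strict Implicit. Unset Printing Implicit Defensive.
Import Order.TTheory GRing.Theory Num.Theory.
Local Open Scope ring_scope.
Local Open Scope classical_set_scope.

(* Substituting the initial terms [f_i = c_i t^(g_i) x^(b_i)] sends the term
   [phi_k(g) t^g x^k] of [Phi] to a single monomial, with exponent
   [f(g, k) = (g, 0) + sum_i k_i ord F_i]; since [det (b_ij) != 0], distinct [k] give
   distinct exponents, so [Phi(f)] is supported exactly on [f(supp Phi)], which is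
   well-ordered iff [supp Phi] is well-ordered for [<=^f].
   For [Phi(F)], write [F_i = f_i (1 + eps_i)] with [eps_i] of positive support. Every term
   of [F^k] (negative powers included) lies in [sum_i k_i ord F_i + M], where [M] is the
   monoid generated by the supports of the [eps_i], well-ordered by Neumann's lemma. So
   [Phi(F)] is supported in [f(supp Phi) + M], a sum of two well-ordered sets: it is
   well-ordered, and each of its elements has finitely many decompositions, which gives
   the finiteness part of strict convergence. *)

Lemma infinite_set_injseq (T : Type) (X : set T) : infinite_set X ->
  exists2 u : nat -> T, (forall i, X (u i)) & injective u.
Proof.
elim/Ppointed: T X => T X; first by move=> /infinite_setN0[x _]; case: (no x).
move=> /infiniteP/pcard_leP/injfunPex[u uX uinj].
exists u => [i|i j]; first exact: uX.
by apply: uinj; rewrite ?inE.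
Qed.

Lemma mulmx_det_neq0_inj (R : idomainType) n (M : 'M[R]_n) (u v : 'rV[R]_n) :
  \det M != 0 -> u *m M = v *m M -> u = v.
Proof.
move=> detM uMvM; apply/eqP; rewrite -subr_eq0; apply: contraNT detM => uv.
by apply/det0P; exists (u - v) => //; rewrite mulmxBl uMvM subrr.
Qed.

Section WellOrdered.
Variables (A : Type) (le : rel A).

Lemma well_ordered_sub (X Y : set A) :
  Y `<=` X -> well_ordered le X -> well_ordered le Y.
Proof. by move=> YX wX Z ZY; apply: wX; apply: subset_trans ZY YX. Qed.

Lemma well_ordered_image (T : Type) (f : T -> A) (X : set T) :
  well_ordered (fun a b => le (f a) (f b)) X <-> well_ordered le (f @` X).
Proof.
split=> wX Z ZX [z0 Zz0].
  have [x0 Xx0 fx0] := ZX _ Zz0.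
  have [|x [[Xx Zfx] x_min]] := wX (X `&` f @^-1` Z) (@subIsetl _ _ _).
    by exists x0; split=> //=; rewrite fx0.
  exists (f x); split=> // _ /[dup] /ZX[y Xy <-] Zfy; exact: x_min.
have [|_ [[x Zx <-] x_min]] := wX (f @` Z) (image_subset f ZX).
  by exists (f z0), z0.
by exists x; split=> // y Zy; apply: x_min; exists y.
Qed.

End WellOrdered.

Section TotallyOrderedGroup.
Variables (A : zmodType) (le : rel A) (leA : TOA le).

Lemma toa_refl a : le a a. Proof. by case: leA. Qed.

Lemma toa_anti a b : le a b -> le b a -> a = b.
Proof. by case: leA => _ + _ _ _; apply. Qed.

Lemma toa_trans b a c : le a b -> le b c -> le a c.
Proof. by case: leA => _ _ + _ _; apply. Qed.

Lemma toa_total a b : le a b || le b a. Proof. by case: leA. Qed.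

Lemma toa_leD2r c a b : le (a + c) (b + c) = le a b.
Proof.
case: leA => _ _ _ _ leD; apply/idP/idP => [|ab]; last exact: leD.
by move/(leD _ _ (- c)); rewrite !addrK.
Qed.

Lemma toa_leD a b c d : le a b -> le c d -> le (a + c) (b + d).
Proof.
move=> ab cd; apply: (toa_trans (b := b + c)); first by rewrite toa_leD2r.
by rewrite ![b + _]addrC toa_leD2r.
Qed.

Lemma toa_ltW a b : ~~ le a b -> le b a.
Proof. by have := toa_total a b; case: (le a b). Qed.

Lemma toa_nle_trans b a c : ~~ le a b -> ~~ le b c -> ~~ le a c.
Proof. by move=> /negP ab bc; apply/negP => ac; apply: ab (toa_trans ac (toa_ltW bc)). Qed.

Lemma toa_leB2l c x y : le (c - x) (c - y) -> le y x.
Proof.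
have cancel z w : c - z + (z + w - c) = w by rewrite !addrA subrK addrAC subrr add0r.
by rewrite -(toa_leD2r (x + y - c)) cancel [x + y]addrC cancel.
Qed.

Lemma well_ordered_monotone_subseq (X : set A) (u : nat -> A) :
  well_ordered le X -> (forall i, X (u i)) ->
  exists h : nat -> nat, (forall i j, (i < j)%N -> (h i < h j)%N) /\
    (forall i j, (i <= j)%N -> le (u (h i)) (u (h j))).
Proof.
move=> wX Xu.
have least_after i : exists j, (i <= j)%N /\ forall j', (i <= j')%N -> le (u j) (u j').
  have sub : u @` [set j | (i <= j)%N] `<=` X by move=> _ [j _ <-].
  have [|_ [[j ij <-] j_min]] := wX _ sub; first by exists (u i); exists i => /=.
  by exists j; split=> // j' ij'; apply: j_min; exists j'.
have [m m_spec] := choice least_after.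
pose fix h k := if k is k'.+1 then m (h k').+1 else m 0%N.
have h_ltS k : (h k < h k.+1)%N by have [] := m_spec (h k).+1.
have h_leS k : le (u (h k)) (u (h k.+1)).
  case: k => [|k] /=; first by have [_] := m_spec 0%N; apply.
  have [h_ge h_min] := m_spec (h k).+1; apply: h_min.
  exact: leq_trans h_ge (ltnW (h_ltS k.+1)).
exists h; split; first exact: (homo_ltn (r := fun a b => (a < b)%N) ltn_trans h_ltS).
apply: (homo_leq (f := h) (r := fun a b => le (u a) (u b))) h_leS => [x|y x z].
  exact: toa_refl.
exact: toa_trans.
Qed.

Lemma good_well_ordered (X : set A) :
  (forall u : nat -> A, (forall i, X (u i)) -> exists i j, (i < j)%N /\ le (u i) (u j)) ->
  well_ordered le X.
Proof.
move=> good Z ZX [z0 Zz0]; apply: contrapT => no_min.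
have smaller z : exists z', Z z -> Z z' /\ ~~ le z z'.
  have [Zz|] := pselect (Z z); last by exists z.
  apply: contrapT => no_smaller; apply: no_min; exists z; split=> // y Zy.
  by apply: contrapT => /negP zy; apply: no_smaller; exists y.
have [next next_spec] := choice smaller.
pose u k := iter k next z0.
have Zu k : Z (u k) by elim: k => //= k IH; have [] := next_spec _ IH.
have u_decr k : ~~ le (u k) (u k.+1) by have [] := next_spec _ (Zu k).
have [i [j [ij uij]]] := good u (fun i => ZX _ (Zu i)).
have := homo_ltn (r := fun a b => ~~ le a b) (@toa_nle_trans) u_decr ij.
by rewrite uij.
Qed.

Lemma well_orderedU (X Y : set A) :
  well_ordered le X -> well_ordered le Y -> well_ordered le (X `|` Y).
Proof.
move=> wX wY Z ZXY Z0.
have [[x [Zx Xx]]|noX] := pselect (exists x, (Z `&` X) x); last first.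
  by apply: wY Z0 => z Zz; case: (ZXY _ Zz) => // Xz; case: noX; exists z.
have [[y [Zy Yy]]|noY] := pselect (exists y, (Z `&` Y) y); last first.
  by apply: wX Z0 => z Zz; case: (ZXY _ Zz) => // Yz; case: noY; exists z.
have [m1 [[Zm1 _] m1_min]] := wX _ (@subIsetr _ _ _) (ex_intro _ x (conj Zx Xx)).
have [m2 [[Zm2 _] m2_min]] := wY _ (@subIsetr _ _ _) (ex_intro _ y (conj Zy Yy)).
case/orP: (toa_total m1 m2) => [m12|m21]; [exists m1|exists m2]; split=> // z Zz.
- case: (ZXY _ Zz) => [Xz|Yz]; first exact: m1_min.
  exact: toa_trans m12 (m2_min _ (conj Zz Yz)).
- case: (ZXY _ Zz) => [Xz|Yz]; last exact: m2_min.
  exact: toa_trans m21 (m1_min _ (conj Zz Xz)).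
Qed.

Lemma well_ordered_bigcup (I : finType) (X : I -> set A) :
  (forall i, well_ordered le (X i)) -> well_ordered le (\bigcup_i X i).
Proof.
move=> wX; suff w_seq (r : seq I) : well_ordered le [set a | exists2 i, i \in r & X i a].
  by apply: (well_ordered_sub _ (w_seq (enum I))) => a [i _ Xia]; exists i; rewrite ?mem_enum.
elim: r => [|i r IH]; first by move=> Z Z0 [z /Z0[]].
apply: (well_ordered_sub _ (well_orderedU (wX i) IH)) => a [j].
by rewrite inE => /predU1P[-> Xia|jr Xja]; [left|right; exists j].
Qed.

Lemma well_ordered_shift (X : set A) c :
  well_ordered le X -> well_ordered le [set x + c | x in X].
Proof.
move=> wX; apply/(well_ordered_image _ (fun x => x + c)) => Z ZX /(wX _ ZX)[m [Zm m_min]].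
by exists m; split=> // y Zy; rewrite toa_leD2r; apply: m_min.
Qed.

Lemma well_ordered_addset (X Y : set A) : well_ordered le X -> well_ordered le Y ->
  well_ordered le [set x + y | x in X & y in Y].
Proof.
move=> wX wY; apply: good_well_ordered => u XYu.
have /choice[xy xyP] i : exists p : A * A, [/\ X p.1, Y p.2 & p.1 + p.2 = u i].
  by have [x Xx [y Yy e]] := XYu i; exists (x, y).
have [Xx Yy] : (forall i, X (xy i).1) /\ forall i, Y (xy i).2.
  by split=> i; case: (xyP i).
have [h [h_incr xh_mono]] := well_ordered_monotone_subseq wX Xx.
have [h' [h'_incr yhh'_mono]] := well_ordered_monotone_subseq wY (fun i => Yy (h i)).
exists (h (h' 0%N)), (h (h' 1%N)); split; first exact/h_incr/h'_incr.
have [_ _ <-] := xyP (h (h' 0%N)); have [_ _ <-] := xyP (h (h' 1%N)).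
by apply: toa_leD; [apply/xh_mono/ltnW/h'_incr | apply: yhh'_mono].
Qed.

Lemma finite_decompositions (X Y : set A) c :
  well_ordered le X -> well_ordered le Y -> finite_set [set x | X x /\ Y (c - x)].
Proof.
move=> wX wY; apply: contrapT => /infinite_set_injseq[u XYu u_inj].
have [h [h_incr xh_mono]] := well_ordered_monotone_subseq wX (fun i => (XYu i).1).
have [h' [h'_incr yhh'_mono]] :=
  well_ordered_monotone_subseq wY (fun i => (XYu (h i)).2).
have h01 : (h (h' 0%N) < h (h' 1%N))%N by exact/h_incr/h'_incr.
have /eqP := u_inj _ _ (toa_anti (xh_mono _ _ (ltnW (h'_incr 0%N 1%N erefl)))
                               (toa_leB2l (yhh'_mono 0%N 1%N erefl))).
by rewrite (ltn_eqF h01).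
Qed.

Section Neumann.
Variables (S : set A) (wS : well_ordered le S) (S_gt0 : forall s, S s -> ~~ le s 0).

Inductive sums_of : nat -> A -> Prop :=
| sums_of0 : sums_of 0 0
| sums_ofS k s a : S s -> sums_of k a -> sums_of k.+1 (s + a).

Definition monoid_gen (a : A) : Prop := exists k, sums_of k a.

Lemma monoid_gen0 : monoid_gen 0. Proof. by exists 0%N; constructor. Qed.

Lemma monoid_gen_gen s : S s -> monoid_gen s.
Proof. by move=> Ss; exists 1%N; rewrite -[s]addr0; do 2?constructor. Qed.

Lemma monoid_genD a b : monoid_gen a -> monoid_gen b -> monoid_gen (a + b).
Proof.
move=> [k ka] [l lb]; elim: ka => [|{}k s {}a Ss _ [m ma]]; first by rewrite add0r; exists l.
by exists m.+1; rewrite -addrA; constructor.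
Qed.

Lemma monoid_gen_ge0 a : monoid_gen a -> le 0 a.
Proof.
move=> [k]; elim=> [|{}k s {}a Ss _ a_ge0]; first exact: toa_refl.
by rewrite -[0]addr0; apply: toa_leD a_ge0; apply/toa_ltW/S_gt0.
Qed.

Lemma sums_of_neq0 N b : sums_of N b -> b != 0 ->
  (0 < N)%N /\ exists2 s, S s & exists2 r, sums_of N.-1 r & b = s + r.
Proof. by case=> [|m s r Ss rm]; rewrite ?eqxx // => _; split=> //; exists s => //; exists r. Qed.

Definition descends_from (a : A) : Prop := exists u : nat -> A,
  u 0%N = a /\ forall i, monoid_gen (u i) /\ ~~ le (u i) (u i.+1).

Lemma descends_from_monoid_gen a : descends_from a -> monoid_gen a.
Proof. by move=> [u [<- u_decr]]; have [] := u_decr 0%N. Qed.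

Lemma descends_from_next a : descends_from a -> exists2 b, ~~ le a b & descends_from b.
Proof.
move=> [u [<- u_decr]]; exists (u 1%N); first by case: (u_decr 0%N).
by exists (u \o succn); split=> // i; apply: u_decr.
Qed.

Lemma descends_from_min_length a : descends_from a -> exists b N,
  [/\ ~~ le a b, descends_from b, sums_of N b &
      forall b' N', ~~ le a b' -> descends_from b' -> sums_of N' b' -> (N <= N')%N].
Proof.
move=> /descends_from_next[b ab /[dup] bD /descends_from_monoid_gen[N bN]].
have exN : exists N, `[< exists b, [/\ ~~ le a b, descends_from b & sums_of N b] >].
  by exists N; apply/asboolP; exists b.
case: (ex_minnP exN) => {b ab bD N bN}N /asboolP[b [ab bD bN]] N_min.
exists b, N; split=> // b' N' ab' b'D b'N'; apply: N_min; apply/asboolP; by exists b'.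
Qed.

(* Nash-Williams' minimal bad sequence, the size of an element being the least
   number of generators summing to it. *)
Lemma minimal_bad_chain a : descends_from a -> exists (c : nat -> A) (N : nat -> nat),
  forall k, [/\ descends_from (c k), ~~ le (c k) (c k.+1), sums_of (N k.+1) (c k.+1) &
    forall b N', ~~ le (c k) b -> descends_from b -> sums_of N' b -> (N k.+1 <= N')%N].
Proof.
move=> aD.
have /choice[next next_spec] b : exists p : A * nat, descends_from b ->
    [/\ ~~ le b p.1, descends_from p.1, sums_of p.2 p.1 &
        forall b' N', ~~ le b b' -> descends_from b' -> sums_of N' b' -> (p.2 <= N')%N].
  have [/descends_from_min_length[c [N cP]]|nbD] := pselect (descends_from b).
    by exists (c, N); move=> _.
  by exists (b, 0%N); move/nbD.
pose c k := iter k (fst \o next) a.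
have cD k : descends_from (c k) by elim: k => //= k IH; have [] := next_spec _ IH.
exists c, (fun k => (next (c k.-1)).2) => k.
by have [] := next_spec _ (cD k).
Qed.

Lemma no_descent a : ~ descends_from a.
Proof.
move=> /minimal_bad_chain[c [N c_spec]].
have c_decr : {homo c : i j / (i < j)%N >-> ~~ le i j}.
  by apply: homo_ltn (@toa_nle_trans) _ => k; have [] := c_spec k.
have /choice[sr sr_spec] k : exists p : A * A,
    [/\ S p.1, sums_of (N k.+1).-1 p.2, c k.+1 = p.1 + p.2 & (0 < N k.+1)%N].
  have [_ c_lt _ _] := c_spec k.+1; have [_ _ cN _] := c_spec k.
  have c_neq0 : c k.+1 != 0.
    have [cD _ _ _] := c_spec k.+2.
    by apply: contraNneq c_lt => ->; apply/monoid_gen_ge0/descends_from_monoid_gen.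
  have [N_gt0 [s Ss [r rN ->]]] := sums_of_neq0 cN c_neq0.
  by exists (s, r).
have [Ss rN c_eq N_gt0] : [/\ forall k, S (sr k).1, forall k, sums_of (N k.+1).-1 (sr k).2,
    forall k, c k.+1 = (sr k).1 + (sr k).2 & forall k, (0 < N k.+1)%N].
  by split=> k; case: (sr_spec k).
have [h [h_incr sh_mono]] := well_ordered_monotone_subseq wS Ss.
have rhD : descends_from (sr (h 0%N)).2.
  exists (fun i => (sr (h i)).2); split=> // i; split; first by exists (N (h i).+1).-1.
  apply: contra (c_decr _ _ (h_incr i i.+1 (ltnSn i) : (h i).+1 < (h i.+1).+1)%N) => r_le.
  by rewrite !c_eq toa_leD // sh_mono.
have [_ ch_lt _ N_min] := c_spec (h 0%N).
have r_lt : ~~ le (c (h 0%N)) (sr (h 0%N)).2.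
  apply: toa_nle_trans ch_lt _; rewrite c_eq.
  apply: contra (S_gt0 (Ss (h 0%N))) => s_le.
  by rewrite -(toa_leD2r (sr (h 0%N)).2) add0r.
by have := N_min _ _ r_lt rhD (rN (h 0%N)); rewrite leqNgt ltn_predL N_gt0.
Qed.

Lemma well_ordered_monoid_gen : well_ordered le monoid_gen.
Proof.
apply: good_well_ordered => u u_gen; apply: contrapT => bad.
apply: (@no_descent (u 0%N)); exists u; split=> // i; split=> //.
by apply/negP => u_le; apply: bad; exists i, i.+1.
Qed.

End Neumann.

End TotallyOrderedGroup.

Section SeriesAlgebra.
Variables (K : fieldType) (A : zmodType).

Lemma fsumr_neq0 (I : choiceType) (P : set I) (f : I -> K) :
  \sum_(i \in P) f i != 0 -> exists2 i, P i & f i != 0.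
Proof.
move=> /eqP sum_neq0; apply: contrapT => no_i; apply: sum_neq0; apply: fsbig1 => i Pi.
by apply: contrapT => /eqP fi; apply: no_i; exists i.
Qed.

Lemma fsumr_single (I : choiceType) (P : set I) (f : I -> K) x :
  P x -> (forall i, P i -> f i != 0 -> i = x) -> \sum_(i \in P) f i = f x.
Proof.
move=> Px f_single; rewrite -(fsbig_widen [set x] P f) ?fsbig_set1 // => [y ->//|y [Py yx]].
by apply: contrapT => /eqP fy; apply: yx; exact: f_single.
Qed.

Lemma smul_neq0 (X Y : series K A) a : smul X Y a != 0 ->
  exists p : A * A, [/\ p.1 + p.2 = a, X p.1 != 0 & Y p.2 != 0].
Proof.
move=> /fsumr_neq0[p pa]; rewrite mulf_eq0 negb_or => /andP[Xp Yp].
by exists p.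
Qed.

Lemma smul_smonol c a (Y : series K A) b : smul (smono c a) Y b = c * Y (b - a).
Proof.
rewrite /smul (@fsumr_single _ _ _ (a, b - a)) /= ?/smono ?eqxx //.
  by rewrite addrC subrK.
move=> [p1 p2] /= <-; case: (p1 =P a) => [->|]; last by rewrite mul0r eqxx.
by rewrite [a + p2]addrC addrK.
Qed.

Lemma smul_smonor c a (Y : series K A) b : smul Y (smono c a) b = Y (b - a) * c.
Proof.
rewrite /smul (@fsumr_single _ _ _ (b - a, a)) /= ?/smono ?eqxx ?subrK //.
move=> [p1 p2] /= <-; case: (p2 =P a) => [->|]; last by rewrite mulr0 eqxx.
by rewrite addrK.
Qed.

Lemma smul_smono c d a b : smul (smono c a) (smono d b) = smono (c * d) (a + b) :> series K A.
Proof.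
apply/funext => x; rewrite smul_smonol /smono subr_eq (addrC b).
by case: ifP; rewrite ?mulr0.
Qed.

Lemma iter_smul_smono (c : K) (a : A) m : c != 0 ->
  exists2 d, d != 0 & iter m (smul (smono c a)) (@sone K A) = smono d (a *+ m).
Proof.
move=> c0; elim: m => [|m [d d0 IH]]; first by exists 1; rewrite ?oner_neq0 ?mulr0n.
by exists (c * d); rewrite ?mulf_neq0 //= IH smul_smono mulrS.
Qed.

Variable le : rel A.

Lemma sord_least (X : series K A) :
  hahn le X -> X <> @szero K A -> is_least le (supp X) (sord le X).
Proof.
move=> hX X_neq0; rewrite /sord; case: pselect => [|no_least]; first by case=> ? ? /=; case: cid.
exfalso; apply: no_least; apply: hX => //; apply: contrapT => supp0; apply: X_neq0.
by apply/funext => a; apply: contrapT => /eqP Xa; apply: supp0; exists a.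
Qed.

Hypothesis leA : TOA le.

Lemma hahn_smono (c : K) a : hahn le (smono c a).
Proof.
move=> Z Zsupp [z Zz]; have supp_a y : Z y -> y = a.
  by move=> /Zsupp; rewrite /supp /= /smono; case: (y =P a) => //; rewrite eqxx.
by exists a; split=> [|y /supp_a ->]; [rewrite -(supp_a _ Zz) | exact: toa_refl].
Qed.

Lemma sinv_smono (c : K) a : c != 0 -> sinv le (smono c a) = smono c^-1 (- a).
Proof.
move=> c0; rewrite /sinv; case: pselect => [inv_ex|]; last first.
  case; exists (smono c^-1 (- a)); split; first exact: hahn_smono.
  by rewrite smul_smono mulfV // subrr.
case: cid => Y [_ /= /(congr1 (fun Z => Z (_ + a)))] inv_eq.
apply/funext => x; apply: (mulfI c0); have := inv_eq x.
by rewrite smul_smonol addrK /sone /smono addr_eq0 => ->; case: ifP; rewrite ?mulfV ?mulr0.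
Qed.

Lemma spowz_smono (c : K) a k : c != 0 ->
  exists2 d, d != 0 & spowz le (smono c a) k = smono d (a *~ k).
Proof.
move=> c0; case: k => m; rewrite /spowz; first by rewrite -pmulrn; exact: iter_smul_smono.
rewrite sinv_smono // NegzE mulrNz -pmulrn -mulNrn.
exact: iter_smul_smono (invr_neq0 c0).
Qed.

Section SupportInShiftedMonoid.
Variables (M : set A) (M0 : M 0) (MD : forall x y, M x -> M y -> M (x + y)).

Definition supp_in_shift (a : A) (X : series K A) : Prop :=
  forall b, X b != 0 -> M (b - a).

Lemma supp_in_shift_sone : supp_in_shift 0 (@sone K A).
Proof. by move=> b; rewrite /sone /smono; case: (b =P 0) => [->|]; rewrite ?subrr ?eqxx. Qed.

Lemma supp_in_shift_smul X Y a b :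
  supp_in_shift a X -> supp_in_shift b Y -> supp_in_shift (a + b) (smul X Y).
Proof.
move=> XM YM x /smul_neq0[[p1 p2] [/= <- Xp1 Yp2]].
by rewrite opprD addrACA; apply: MD; [apply: XM | apply: YM].
Qed.

Lemma supp_in_shift_iter X a m :
  supp_in_shift a X -> supp_in_shift (a *+ m) (iter m (smul X) (@sone K A)).
Proof.
move=> XM; elim: m => [|m IH]; first by rewrite mulr0n; exact: supp_in_shift_sone.
by rewrite mulrS; apply: supp_in_shift_smul.
Qed.

(* Were [m] the least exponent of [Y := sinv X] outside [-o + M], the coefficient of
   [X * Y = 1] at [o + m] would be [X o * Y m != 0], forcing [o + m = 0], i.e. [m + o \in M].
   No inverse at all is fine too: [sinv] then returns [0]. *)
Lemma supp_in_shift_sinv (X : series K A) o :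
  is_least le (supp X) o -> supp_in_shift o X -> supp_in_shift (- o) (sinv le X).
Proof.
move=> [Xo o_min] XM; rewrite /sinv; case: pselect => [XY_ex|_]; last by move=> b; rewrite eqxx.
case: cid => Y [hY XY1] /= b Yb; rewrite opprK; apply: contrapT => bM.
have [|m [[Ym mM] m_min]] := hY [set y | Y y != 0 /\ ~ M (y + o)] (fun y => @proj1 _ _).
  by exists b.
have XYom : smul X Y (o + m) = X o * Y m.
  rewrite /smul (@fsumr_single _ _ _ (o, m)) //= => -[p1 p2] /= p12.
  rewrite mulf_eq0 negb_or => /andP[Xp1 Yp2].
  have [p1o|p1o] := eqVneq p1 o; first by move: p12; rewrite p1o => /addrI ->.
  have o_lt_p1 : ~~ le p1 o.
    by apply: contraNN p1o => p1_le; apply/eqP; exact: (toa_anti leA p1_le (o_min _ Xp1)).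
  have p2M : M (p2 + o).
    apply: contrapT => p2_nM; case/negP: o_lt_p1.
    rewrite -(toa_leD2r leA p2) p12 ![o + _]addrC (toa_leD2r leA).
    exact: m_min.
  have := MD p2M (XM _ Xp1).
  by rewrite addrACA subrr addr0 addrC p12 addrC => /mM.
have := congr1 (fun Z => Z (o + m)) XY1; rewrite /= XYom /sone /smono.
case: eqP => [om0 _|_ /eqP]; last by rewrite mulf_eq0 (negPf Xo) (negPf Ym).
by case: mM; rewrite addrC om0.
Qed.

End SupportInShiftedMonoid.

End SeriesAlgebra.

Section Substitution.
Variables (K : fieldType) (G : zmodType) (n : nat) (le : rel (GH G n)) (leA : TOA le).
Variables (F : 'I_n -> series K (GH G n)) (hahnF : forall i, hahn le (F i)).
Hypotheses (F_neq0 : forall i, F i <> @szero K _) (jacF : jacobian_number le F != 0).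
Variable phi : 'rV[int]_n -> series K G.
Local Notation A := (GH G n).

Let o i := sord le (F i).
Let o_least i : is_least le (supp (F i)) (o i) := sord_least (@hahnF i) (@F_neq0 i).

Definition pow_ord (k : 'rV[int]_n) : A := \sum_(i < n) o i *~ k ord0 i.

Lemma fendoE g k : fendo le F (g, k) = (g, 0) + pow_ord k.
Proof.
rewrite /fendo /pow_ord; congr (_, _); rewrite /= ?add0r raddf_sum.
  by congr (_ + _); apply: eq_bigr => i _; rewrite raddfMz.
apply/rowP => j; rewrite mxE summxE; apply: eq_bigr => i _.
by rewrite raddfMz -scaler_int !mxE intz mulrC.
Qed.

Section InitialTerms.
Let f i := sinit le (F i).
Let T := subst_terms le phi f.

Lemma prod_spowz_sinit (k : 'rV[int]_n) : exists2 d : K, d != 0 &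
  \big[@smul K _/@sone K _]_(i < n) spowz le (f i) (k ord0 i) = smono d (pow_ord k).
Proof.
rewrite /pow_ord; apply: (big_rec2 (fun X a => exists2 d, d != 0 & X = smono d a)).
  by exists 1; rewrite ?oner_neq0.
move=> i _ a _ [d d0 ->]; have [Fo _] := o_least i.
have [d' d'0 ->] := spowz_smono leA (o i) (k ord0 i) Fo.
by exists (d' * d); rewrite ?mulf_neq0 // smul_smono.
Qed.

Lemma sinit_term_neq0 (k : 'rV[int]_n) b :
  T k b != 0 <-> exists2 g, phi k g != 0 & b = fendo le F (g, k).
Proof.
rewrite /T /subst_terms; have [d d0 ->] := prod_spowz_sinit k.
rewrite smul_smonor mulf_eq0 (negPf d0) orbF /liftG; split.
  case: ((b - pow_ord k).2 =P 0) => [bk0 phi_neq0|]; last by rewrite eqxx.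
  exists (b - pow_ord k).1 => //; rewrite fendoE -bk0 -surjective_pairing.
  by rewrite subrK.
by move=> [g phi_neq0 ->]; rewrite fendoE addrK eqxx.
Qed.

Lemma sinit_terms_disjoint k k' b : T k b != 0 -> T k' b != 0 -> k = k'.
Proof.
move=> /sinit_term_neq0[g _ ->] /sinit_term_neq0[g' _ /(congr1 snd) /= kk'].
exact: mulmx_det_neq0_inj jacF kk'.
Qed.

Lemma sinit_terms_finite b : finite_set [set k | T k b != 0].
Proof.
have [[k Tk]|no_k] := pselect (exists k, T k b != 0).
  by apply: (sub_finite_set _ (finite_set1 k)) => k' Tk'; exact: sinit_terms_disjoint Tk' Tk.
by apply: (sub_finite_set _ (finite_set0 _)) => k' Tk'; apply: no_k; exists k'.
Qed.

Lemma supp_sinit_sum : supp (fun b => \sum_(k \in [set k | T k b != 0]) T k b) =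
  fendo le F @` supp (series_of_coefs phi).
Proof.
apply/seteqP; split=> [b /fsumr_neq0[k _ /sinit_term_neq0[g phi_neq0 ->]]|].
  by exists (g, k).
move=> _ [[g k] phi_neq0 <-]; have Tk : T k (fendo le F (g, k)) != 0.
  by apply/sinit_term_neq0; exists g.
by rewrite /supp /= (fsumr_single (x := k)) // => k' Tk' _; exact: sinit_terms_disjoint Tk' Tk.
Qed.

Lemma sinit_subst_converges :
  hahn (le_f le F) (series_of_coefs phi) <-> strictly_converges le T.
Proof.
rewrite /strictly_converges /hahn /le_f well_ordered_image supp_sinit_sum.
by split=> [|[]//]; split=> //; exact: sinit_terms_finite.
Qed.

End InitialTerms.

Section Perturbation.
(* The support of [F i / f i - 1]. *)
Let eps_supp i : set A := [set a | F i (a + o i) != 0 /\ a != 0].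
Let S := \bigcup_i eps_supp i.
Let M := monoid_gen S.

Lemma eps_supp_gt0 a : S a -> ~~ le a 0.
Proof.
move=> [i _ [Fao a_neq0]]; apply: contra a_neq0 => a_le0; apply/eqP.
apply: (toa_anti leA a_le0); have [_ o_min] := o_least i.
by rewrite -(toa_leD2r leA (o i)) add0r; apply: o_min.
Qed.

Lemma well_ordered_eps_supp : well_ordered le S.
Proof.
apply: (well_ordered_bigcup leA) => i.
apply: (well_ordered_sub _ (@well_ordered_shift _ _ leA (supp (F i)) (- o i) (@hahnF i))).
by move=> a [Fao _]; exists (a + o i) => //; rewrite addrK.
Qed.

Let M0 : M 0 := monoid_gen0 S.
Let MD : forall a b, M a -> M b -> M (a + b) := @monoid_genD _ S.

Lemma supp_in_shift_F i : supp_in_shift M (o i) (F i).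
Proof.
move=> b Fb; have [/eqP ->|bo] := boolP (b == o i); first by rewrite subrr.
by apply: monoid_gen_gen; exists i => //; split; rewrite ?subrK ?subr_eq0.
Qed.

Lemma supp_in_shift_spowz i (m : int) : supp_in_shift M (o i *~ m) (spowz le (F i) m).
Proof.
case: m => m; rewrite /spowz.
  by rewrite -pmulrn; apply: (supp_in_shift_iter M0 MD); apply: supp_in_shift_F.
rewrite NegzE mulrNz -pmulrn -mulNrn; apply: (supp_in_shift_iter M0 MD).
exact: (supp_in_shift_sinv leA M0 MD (o_least i) (@supp_in_shift_F i)).
Qed.

Lemma supp_in_shift_prod (k : 'rV[int]_n) : supp_in_shift M (pow_ord k)
  (\big[@smul K _/@sone K _]_(i < n) spowz le (F i) (k ord0 i)).
Proof.
apply: (big_rec2 (fun a X => supp_in_shift M a X)); first exact: supp_in_shift_sone.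
by move=> i a X _ XM; apply: supp_in_shift_smul => //; apply: supp_in_shift_spowz.
Qed.

Lemma subst_term_neq0 k b : subst_terms le phi F k b != 0 ->
  exists2 g, phi k g != 0 & M (b - fendo le F (g, k)).
Proof.
move=> /smul_neq0[[[g h] c] [/= <- phi_neq0 prod_neq0]].
move: phi_neq0; rewrite /liftG /=; case: (h =P 0) => [-> phi_neq0|]; last by rewrite eqxx.
exists g => //; rewrite fendoE opprD addrACA subrr add0r.
exact: supp_in_shift_prod prod_neq0.
Qed.

Lemma subst_converges :
  hahn (le_f le F) (series_of_coefs phi) -> strictly_converges le (subst_terms le phi F).
Proof.
rewrite /hahn /le_f well_ordered_image => wPhi.
have wM : well_ordered le M := well_ordered_monoid_gen leA well_ordered_eps_supp eps_supp_gt0.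
split=> [b|].
  have B_inj : injective (fun k : 'rV[int]_n => k *m bmatrix le F).
    by move=> k k'; apply: mulmx_det_neq0_inj jacF.
  have := finite_preimage (in2W B_inj) (finite_image snd (finite_decompositions leA b wPhi wM)).
  apply: sub_finite_set => k /subst_term_neq0[g phi_neq0 bM].
  by exists (fendo le F (g, k)); first by split=> //; exists (g, k).
apply: (well_ordered_sub _ (well_ordered_addset leA wPhi wM)).
move=> b /fsumr_neq0[k _ /subst_term_neq0[g phi_neq0 bM]].
exists (fendo le F (g, k)); first by exists (g, k).
by exists (b - fendo le F (g, k)); rewrite // addrC subrK.
Qed.

End Perturbation.
End Substitution.

Theorem mainTheorem5 (K : fieldType) (G : zmodType) (n : nat)
  (le : rel (GH G n)) (Hle : TOA le)
  (F : 'I_n -> series K (GH G n))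
  (HF : forall i, hahn le (F i))
  (HFnz : forall i, F i <> @szero K _)
  (Hj : jacobian_number le F != 0)
  (phi : 'rV[int]_n -> series K G)
  (Hphi : forall k, hahn (leG le) (phi k)) :
  let f := fun i => sinit le (F i) in
  (hahn (le_f le F) (series_of_coefs phi) <->
     strictly_converges le (subst_terms le phi f)) /\
  (hahn (le_f le F) (series_of_coefs phi) ->
     strictly_converges le (subst_terms le phi F)).
Proof.
move=> f; split; first exact: (sinit_subst_converges Hle HF HFnz Hj phi).
exact: (subst_converges Hle HF HFnz Hj).
Qed.
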